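(* Consider $n$ processes running the Median-based Byzantine Agreement algorithm (described in the context) with any parameter $\alpha$ satisfying $0 \le \alpha < \lceil n/6 \rceil - 1$, in a system with fewer than $\lfloor n/3 \rfloor$ Byzantine processes. Then the algorithm solves Multi-valued Byzantine Agreement with interval validity: (consistency) all non-faulty processes output the same value $d$, and (interval validity) $d \in \{\min T,\dots,\max T\}$, where $T$ is the multiset of inputs of the non-faulty processes.
   Context: System model: $n$ processes $p_1,\dots,p_n$ communicate over a complete network in fully synchronous rounds (every message sent in a round is delivered before the next round); the receiver of a message knows its sender. A Byzantine (faulty) process may deviate arbitrarily from the protocol, e.g. send different messages to different processes or omit messages; the other processes are non-faulty. Each process $p_i$ has an input value $v_i$ from a totally ordered domain $V$ (integers); $\bot \notin V$ is a special default value. WeakMVBA: a Byzantine agreement protocol (tolerating the given number of Byzantine processes) in which each process has an input and all non-faulty processes terminate with: (consistency) the same decision value; (weak validity) if all non-faulty processes have the same input $v$, the decision is $v$; otherwise the decision is some value of $V\cup\{\bot\}$. Median-based Byzantine Agreement algorithm with parameter $\alpha$, run by a process with input $v$: (1) send $v$ to all processes (including itself); initialize an array $A[1..n]$ to $\bot$ and set $A[i]$ to the value received from $p_i$. (2) For each $i=1,\dots,n$, in parallel, run an instance of WeakMVBA in which this process uses input $A[i]$, and replace $A[i]$ by the decision of that instance. (3) Output select\_value$(A)$, defined as: delete all $\bot$ entries of $A$ to obtain a list $A_{\not\bot}$ of length $k$; let $C[u]$ be the number of occurrences of $u$ in $A_{\not\bot}$ and let $m$ be a value maximizing $C[m]$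 (ties broken by a fixed deterministic rule); if $C[m] \ge \lfloor k/3\rfloor + 1 + \alpha$, output $m$; otherwise sort $A_{\not\bot}$ in nondecreasing order and output its median element (the entry at position $\lfloor k/2 \rfloor$; for even $k$ the lower of the two middle values). *)

From mathcomp Require Import all_boot all_order all_algebra.
Set Implicit Arguments. Unset Strict Implicit. Unset Printing Implicit Defensive.
Import Order.TTheory GRing.Theory Num.Theory.

(* Values: V = int; the default value bot is modelled by [None : option int]. *)

Definition mode_picker (pick : seq int -> int) : Prop :=
  forall s : seq int, s != [::] ->
    pick s \in s /\ forall u : int, (count_mem u s <= count_mem (pick s) s)%N.

(* select_value(A): drop bot entries (keeping order), k = length,
   m = picked mode; if C[m] >= floor(k/3) + 1 + alpha output m, else output
   the lower median of the sorted list (0-indexed position (k-1)/2). *)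
Definition select_value (pick : seq int -> int) (alpha : nat)
    (A : seq (option int)) : int :=
  let s := pmap id A in
  let k := size s in
  let m := pick s in
  if (k %/ 3 + 1 + alpha <= count_mem m s)%N then m
  else nth 0%R (sort (fun x y : int => (x <= y)%R) s) (k.-1 %/ 2).

Definition ceil_div6 (n : nat) : nat := (n + 5) %/ 6.

(* Specification of the n parallel WeakMVBA instances, used as a black box:
   [inp i k] is the input of process i to instance k, [dec i k] its decision. *)
Definition WeakMVBA_instances n (F : {set 'I_n})
    (inp dec : 'I_n -> 'I_n -> option int) : Prop :=
  forall k : 'I_n,
    (forall i j, i \notin F -> j \notin F -> dec i k = dec j k) /\
    (forall x : int, (forall i, i \notin F -> inp i k = Some x) ->
       forall i, i \notin F -> dec i k = Some x).

Definition median_BA_output n (pick : seq int -> int) (alpha : nat)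
    (dec : 'I_n -> 'I_n -> option int) (i : 'I_n) : int :=
  select_value pick alpha [seq dec i k | k <- enum 'I_n].

(** By weak validity, instance [k] of a non-faulty [p_k] decides [v_k], and by
    consistency all non-faulty processes hold the same array; its non-bot
    entries are thus the [n - f] honest inputs together with at most [f] other
    values, where [f < n/3]. So whenever more than [f] entries satisfy a
    predicate, some honest input does. This applies to "equals the mode" when
    the mode is selected (it occurs [k/3 + 1 + alpha > f] times), and otherwise
    to "at most the median" and "at least the median". *)

From mathcomp Require Import all_boot all_order all_algebra.
From mathcomp Require Import zify.
Set Implicit Arguments. Unset Strict Implicit. Unset Printing Implicit Defensive.
Import Order.TTheory GRing.Theory Num.Theory.

Lemma has_count_gt_size (T : eqType) (P : pred T) (h b s : seq T) :
  perm_eq s (h ++ b) -> (size b < count P s)%N -> has P h.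
Proof.
move=> /permP ->; rewrite count_cat has_count.
by have := count_size P b; lia.
Qed.

Section SortedCount.

Variables (disp : Order.disp_t) (T : orderType disp).
Variables (x0 : T) (t : seq T) (p : nat).
Hypotheses (t_sorted : sorted <=%O t) (p_lt : (p < size t)%N).

Lemma count_le_nth_sorted : (p.+1 <= count (<= nth x0 t p)%O t)%N.
Proof.
have lep : all (<= nth x0 t p)%O (take p.+1 t).
  apply/(all_nthP x0) => i; rewrite size_takel // => lti.
  rewrite nth_take //=.
  by apply: (le_sorted_leq_nth x0 t_sorted); rewrite ?inE /=; lia.
rewrite -[X in count _ X](cat_take_drop p.+1 t) count_cat.
by move: lep; rewrite all_count size_takel // => /eqP ->; apply: leq_addr.
Qed.

Lemma count_ge_nth_sorted : (size t - p <= count (>= nth x0 t p)%O t)%N.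
Proof.
have gep : all (>= nth x0 t p)%O (drop p t).
  apply/(all_nthP x0) => i; rewrite size_drop => lti.
  rewrite nth_drop /=.
  by apply: (le_sorted_leq_nth x0 t_sorted); rewrite ?inE /=; lia.
rewrite -[X in count _ X](cat_take_drop p t) count_cat.
by move: gep; rewrite all_count size_drop => /eqP ->; apply: leq_addl.
Qed.

End SortedCount.

Lemma select_value_between (pick : seq int -> int) (alpha : nat)
    (A : seq (option int)) (h b : seq int) :
  perm_eq (pmap id A) (h ++ b) -> ((size b).*2 < size h)%N ->
  let d := select_value pick alpha A in
  has (fun x => x <= d)%R h /\ has (fun x => d <= x)%R h.
Proof.
move=> sAhb hb; rewrite /select_value; set s := pmap id A.
have size_s : size s = (size h + size b)%N by rewrite (perm_size sAhb) size_cat.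
case: ifP => [mode_often | _].
  have b_lt_third : (size b < size s %/ 3 + 1 + alpha)%N by rewrite size_s; lia.
  have /hasP [x xh /eqP <-] : has (pred1 (pick s)) h.
    exact: has_count_gt_size sAhb (leq_trans b_lt_third mode_often).
  by split; apply/hasP; exists x.
set t := sort _ s; set p := (size s).-1 %/ 2.
have t_sorted : sorted <=%O t by apply: sort_le_sorted.
have tAhb : perm_eq t (h ++ b) by rewrite (perm_trans (permEl (perm_sort _ _))).
have size_t : size t = size s by rewrite size_sort.
have p_lt : (p < size t)%N by rewrite size_t; lia.
have b_lt_below : (size b < p.+1)%N by rewrite /p size_s; lia.
have b_lt_above : (size b < size t - p)%N by rewrite /p size_t size_s; lia.
split; apply: (has_count_gt_size tAhb).
- exact: leq_trans b_lt_below (count_le_nth_sorted 0%R t_sorted p_lt).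
- exact: leq_trans b_lt_above (count_ge_nth_sorted 0%R t_sorted p_lt).
Qed.

Lemma perm_enum_setC (T : finType) (A : {set T}) :
  perm_eq (enum T) (enum (~: A) ++ enum A).
Proof.
apply: uniq_perm; rewrite ?cat_uniq ?enum_uniq ?andbT //=.
  by apply/hasPn => x; rewrite !mem_enum in_setC negbK.
by move=> x; rewrite mem_cat !mem_enum in_setC orNb.
Qed.

Theorem theorem1 (n alpha : nat) (pick : seq int -> int)
  (Hpick : mode_picker pick)
  (Halpha : (alpha < ceil_div6 n - 1)%N)
  (F : {set 'I_n}) (HF : (#|F| < n %/ 3)%N)
  (v : 'I_n -> int)
  (recv : 'I_n -> 'I_n -> option int)
  (Hrecv : forall i j, i \notin F -> j \notin F -> recv i j = Some (v j))
  (dec : 'I_n -> 'I_n -> option int)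
  (Hdec : WeakMVBA_instances F recv dec) :
  exists d : int,
    (forall i, i \notin F -> median_BA_output pick alpha dec i = d) /\
    (exists i, i \notin F /\ (v i <= d)%R) /\
    (exists j, j \notin F /\ (d <= v j)%R).
Proof.
have card_honest : #|~: F| = (n - #|F|)%N by have := cardsC F; rewrite card_ord; lia.
have [i0] : exists i0, i0 \in ~: F by apply/card_gt0P; lia.
rewrite in_setC => honest_i0.
set faulty_decs := pmap id (map (dec i0) (enum F)).
have honest_decs : pmap id (map (dec i0) (enum (~: F))) = map v (enum (~: F)).
  rewrite -[RHS](map_pK (g := Some) (f := id)) // -map_comp; congr pmap.
  apply/eq_in_map => k; rewrite mem_enum in_setC => honest_k.
  by apply: (Hdec k).2 => // i honest_i; apply: Hrecv.
have decs_perm : perm_eq (pmap id [seq dec i0 k | k <- enum 'I_n])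
                         (map v (enum (~: F)) ++ faulty_decs).
  by rewrite -honest_decs -pmap_cat -map_cat perm_pmap ?perm_map ?perm_enum_setC.
have few_faulty : ((size faulty_decs).*2 < size (map v (enum (~: F))))%N.
  have : (size faulty_decs <= #|F|)%N.
    by rewrite size_pmap cardE -(size_map (dec i0)) count_size.
  by rewrite size_map -cardE card_honest; lia.
have [below above] := select_value_between pick alpha decs_perm few_faulty.
exists (median_BA_output pick alpha dec i0); split.
  move=> i honest_i; congr select_value; apply: eq_map => k.
  exact: (Hdec k).1.
have honest_witness (P : pred int) : has P (map v (enum (~: F))) ->
    exists j, j \notin F /\ P (v j).
  by rewrite has_map => /hasP [j]; rewrite mem_enum in_setC; exists j.
by split; [move: below | move: above]; apply: honest_witness.
Qed.
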